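(* Let $m,n$ be positive integers and let $\mathbf{a},\mathbf{b}\in\mathcal{T}^{n+1}$, $\mathbf{c},\mathbf{d}\in\mathcal{T}^{n}$, $\mathbf{f},\mathbf{g}\in\mathcal{T}^{m+1}$, $\mathbf{h},\mathbf{e}\in\mathcal{T}^{m}$. Set $\mathbf{a}'=\mathbf{a}/0$, $\mathbf{b}'=\mathbf{b}/0$, $\mathbf{c}'=0/\mathbf{c}$, $\mathbf{d}'=0/\mathbf{d}$, $\mathbf{f}'=\mathbf{f}/0$, $\mathbf{g}'=\mathbf{g}/0$, $\mathbf{h}'=0/\mathbf{h}$, $\mathbf{e}'=0/\mathbf{e}$, and define the $(2m+1)\times(2n+1)$ matrices \begin{align*} Q&=\mathbf{f}'^{*t}\mathbf{a}'+\mathbf{g}'^t\mathbf{c}'-\mathbf{e}'^t\mathbf{b}'^*+\mathbf{h}'^t\mathbf{d}',\\ R&=\mathbf{f}'^{*t}\mathbf{b}'+\mathbf{g}'^{*t}\mathbf{d}'+\mathbf{e}'^t\mathbf{a}'^*-\mathbf{h}'^{*t}\mathbf{c}',\\ S&=\mathbf{g}'^{*t}\mathbf{a}'-\mathbf{f}'^t\mathbf{c}'-\mathbf{h}'^t\mathbf{b}'-\mathbf{e}'^t\mathbf{d}'^*,\\ T&=\mathbf{g}'^{t}\mathbf{b}'-\mathbf{f}'^t\mathbf{d}'+\mathbf{h}'^{*t}\mathbf{a}'+\mathbf{e}'^t\mathbf{c}'^*. \end{align*} Then every entry of $Q,R,S,T$ lies in $\mathcal{T}$ (i.e. $Q,R,S,T\in\mathcal{T}^{(2m+1)\times(2n+1)}$),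 and \[ (\psi_Q\psi_Q^*+\psi_R\psi_R^*+\psi_S\psi_S^*+\psi_T\psi_T^* )(x,y)=(\psi_{\mathbf{a}}\psi^*_{\mathbf{a}}+\psi_{\mathbf{b}}\psi^*_{\mathbf{b}}+\psi_{\mathbf{c}}\psi^*_{\mathbf{c}}+\psi_{\mathbf{d}}\psi^*_{\mathbf{d}})(x^2)\,(\psi_{\mathbf{e}}\psi^*_{\mathbf{e}}+\psi_{\mathbf{f}}\psi^*_{\mathbf{f}}+\psi_{\mathbf{g}}\psi^*_{\mathbf{g}}+\psi_{\mathbf{h}}\psi^*_{\mathbf{h}})(y^2). \]
   Context: $\mathcal{R}$ is a commutative ring with identity equipped with an involutive ring automorphism $*$, extended to $\mathcal{R}[x^{\pm1}]$ and $\mathcal{R}[x^{\pm1},y^{\pm1}]$ by acting on coefficients and sending $x\mapsto x^{-1}$, $y\mapsto y^{-1}$. $\mathcal{T}$ is a multiplicatively closed subset of $\mathcal{R}\setminus\{0\}$ with $-1\in\mathcal{T}$ and $\mathcal{T}^*=\mathcal{T}$. For $\mathbf{a}=(a_0,\dots,a_{l-1})\in\mathcal{R}^l$: $\mathbf{a}^*=(a_{l-1}^*,\dots,a_0^* )$, $\phi_{\mathbf{a}}(x)=\sum_{i=0}^{l-1}a_ix^i$, $\psi_{\mathbf{a}}(x)=x^{1-l}\phi_{\mathbf{a}}(x^2)$, $\mathbf{a}/0=(a_0,0,a_1,0,\dots,0,a_{l-1})\in\mathcal{R}^{2l-1}$ and $0/\mathbf{a}=(0,a_0,0,a_1,\dots,0,a_{l-1},0)\in\mathcal{R}^{2l+1}$.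 Vectors are $1\times k$ matrices, $t$ is transpose, so $\mathbf{u}^t\mathbf{v}$ is an outer product matrix. For $A\in\mathcal{R}^{p\times q}$ with rows $\mathbf{a}_0,\dots,\mathbf{a}_{p-1}$, $\psi_A(x,y)=\sum_{i=0}^{p-1}\psi_{\mathbf{a}_i}(x)\,y^{2i+1-p}$. *)

From HB Require Import structures.
From mathcomp Require Import all_boot all_order all_algebra.
Set Implicit Arguments.
Unset Strict Implicit.
Unset Printing Implicit Defensive.
Import GRing.Theory Num.Theory.
Local Open Scope ring_scope.

Section Defs.
Variable R : comNzRingType.
Variable star : R -> R.

Definition vstar l (a : 'rV[R]_l) : 'rV[R]_l := \row_i star (a 0 (rev_ord i)).

(* a/0 = (a_0,0,a_1,0,...,0,a_l) for a of length l+1 (result has length 2l+1) *)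
Definition slash0 l (a : 'rV[R]_l.+1) : 'rV[R]_(l.*2.+1) :=
  \row_(k < l.*2.+1) \sum_(j < l.+1) (if (k == j.*2 :> nat) then a 0 j else 0).

(* 0/a = (0,a_0,0,a_1,...,0,a_{l-1},0) for a of length l (result length 2l+1) *)
Definition zslash l (a : 'rV[R]_l) : 'rV[R]_(l.*2.+1) :=
  \row_(k < l.*2.+1) \sum_(j < l) (if (k == j.*2.+1 :> nat) then a 0 j else 0).

(* Laurent polynomials in R[x^{+-1}] (resp. R[x^{+-1},y^{+-1}]) represented as
   formal finite sums of monomials (coefficient, exponent(s)); two such
   representations denote the same Laurent polynomial iff all coefficients agree. *)
Definition laur1 := seq (R * int).
Definition laur2 := seq (R * (int * int)).

Definition coef2 (p : laur2) (e : int * int) : R :=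
  \sum_(u <- p) (if u.2 == e then u.1 else 0).

Definition laur2_eq (p q : laur2) : Prop := forall e, coef2 p e = coef2 q e.

Definition mul1 (p q : laur1) : laur1 :=
  [seq (u.1 * v.1, u.2 + v.2) | u <- p, v <- q].
Definition mul2 (p q : laur2) : laur2 :=
  [seq (u.1 * v.1, (u.2.1 + v.2.1, u.2.2 + v.2.2)) | u <- p, v <- q].
Definition star1 (p : laur1) : laur1 := [seq (star u.1, - u.2) | u <- p].
Definition star2 (p : laur2) : laur2 :=
  [seq (star u.1, (- u.2.1, - u.2.2)) | u <- p].
Definition add1 (p q : laur1) : laur1 := p ++ q.
Definition add2 (p q : laur2) : laur2 := p ++ q.

Definition at_x2 (p : laur1) : laur2 := [seq (u.1, (2 * u.2, 0)) | u <- p].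
Definition at_y2 (p : laur1) : laur2 := [seq (u.1, (0, 2 * u.2)) | u <- p].

(* psi_a(x) = x^{1-l} phi_a(x^2) = sum_i a_i x^{2i+1-l} *)
Definition psi1 l (a : 'rV[R]_l) : laur1 :=
  [seq (a 0 i, (i.*2.+1)%:Z - l%:Z) | i <- enum 'I_l].

(* psi_A(x,y) = sum_i psi_{a_i}(x) y^{2i+1-p} *)
Definition psi2 p q (A : 'M[R]_(p, q)) : laur2 :=
  [seq (A i j, ((j.*2.+1)%:Z - q%:Z, (i.*2.+1)%:Z - p%:Z))
  | i <- enum 'I_p, j <- enum 'I_q].

Definition nrm1 l (a : 'rV[R]_l) : laur1 := mul1 (psi1 a) (star1 (psi1 a)).
Definition nrm2 p q (A : 'M[R]_(p, q)) : laur2 := mul2 (psi2 A) (star2 (psi2 A)).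

End Defs.

(* The substitution x |-> x^2 identifies psi_{a/0}(x) and psi_{0/a}(x) with psi_a(x^2), the
   substitution y |-> y^2 likewise for the row vectors e, f, g, h, psi is additive, sends
   an outer product u^t v to psi_u(y) psi_v(x), and turns the starred (reversed and
   conjugated) vector into the image under the involution. So psi_Q, psi_R, psi_S, psi_T
   are the components of a product of two quaternions with entries
   (psi_a, psi_b, psi_c, psi_d)(x^2) and (psi_e, psi_f, psi_g, psi_h)(y^2), and the identity
   is the multiplicativity of the quaternion norm in the commutative ring with involution of
   Laurent polynomials (here formal sums compared coefficientwise, a setoid ring for [ring]).
   For the entries: a', b', f', g' live on even positions and c', d', e', h' on odd ones, so
   every entry of Q, R, S, T receives exactly one nonzero term, a product of elements of T
   up to sign. *)

From HB Require Import structures.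
From mathcomp Require Import all_boot all_order all_algebra zify.
From Stdlib Require Import Setoid Ring Morphisms.
Set Implicit Arguments.
Unset Strict Implicit.
Unset Printing Implicit Defensive.
Import GRing.Theory.
Local Open Scope ring_scope.

Section LaurentRing.
Variable R : comNzRingType.
Variable star : {rmorphism R -> R}.
Hypothesis star_invol : involutive star.
Local Notation L := (laur2 R).

Definition opp2 (p : L) : L := [seq (- u.1, u.2) | u <- p].
Definition sub2 (p q : L) : L := add2 p (opp2 q).
Definition one2 : L := [:: (1, 0)].

Lemma coef2_cat (p q : L) e : coef2 (p ++ q) e = coef2 p e + coef2 q e.
Proof. by rewrite /coef2 big_cat. Qed.

Lemma coef2_opp p e : coef2 (opp2 p) e = - coef2 p e.
Proof.
rewrite /coef2 big_map -sumrN; apply: eq_bigr => u _ /=.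
by case: ifP; rewrite ?oppr0.
Qed.

Lemma coef2_mul_sum (p q : L) e : coef2 (mul2 p q) e =
  \sum_(u <- p) \sum_(v <- q) (if u.2 + v.2 == e then u.1 * v.1 else 0).
Proof. by rewrite /coef2 /mul2 big_allpairs_dep. Qed.

Lemma coef2_mul (p q : L) e :
  coef2 (mul2 p q) e = \sum_(u <- p) u.1 * coef2 q (e - u.2).
Proof.
rewrite coef2_mul_sum; apply: eq_bigr => u _; rewrite /coef2 mulr_sumr.
apply: eq_bigr => v _.
have -> : (u.2 + v.2 == e) = (v.2 == e - u.2).
  by rewrite [RHS]eq_sym subr_eq eq_sym addrC.
by case: ifP; rewrite ?mulr0.
Qed.

Lemma coef2_star p e : coef2 (star2 star p) e = star (coef2 p (- e)).
Proof.
rewrite /coef2 big_map rmorph_sum; apply: eq_bigr => -[r [x y]] _ /=.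
case: e => x' y'; rewrite !xpair_eqE !eqr_oppLR.
by case: ifP; rewrite ?rmorph0.
Qed.

Lemma mul2C (p q : L) : laur2_eq (mul2 p q) (mul2 q p).
Proof.
move=> e; rewrite !coef2_mul_sum exchange_big.
by apply: eq_bigr => v _; apply: eq_bigr => u _; rewrite addrC mulrC.
Qed.

#[local] Instance laur2_eq_equiv : Equivalence (@laur2_eq R).
Proof. by split=> [p e | p q pq e | p q r pq qr e]; rewrite ?pq ?qr. Qed.

Lemma laur2_ring_theory :
  @ring_theory L [::] one2 (@add2 R) (@mul2 R) sub2 opp2 (@laur2_eq R).
Proof.
split=> [p e|p q e|p q r e|p e|||p q r e|//|p e].
- by rewrite coef2_cat /coef2 big_nil add0r.
- by rewrite !coef2_cat addrC.
- by rewrite !coef2_cat addrA.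
- by rewrite coef2_mul big_seq1 subr0 mul1r.
- exact: mul2C.
- move=> p q r e; rewrite !coef2_mul big_allpairs_dep; apply: eq_bigr => u _.
  rewrite coef2_mul mulr_sumr; apply: eq_bigr => v _ /=.
  by rewrite mulrA opprD addrA.
- by rewrite coef2_mul coef2_cat !coef2_mul big_cat.
- by rewrite coef2_cat coef2_opp subrr /coef2 big_nil.
Qed.

Lemma laur2_ring_eq_ext : @ring_eq_ext L (@add2 R) (@mul2 R) opp2 (@laur2_eq R).
Proof.
split=> [p p' pp' q q' qq' e | p p' pp' q q' qq' e | p p' pp' e].
- by rewrite !coef2_cat pp' qq'.
- transitivity (coef2 (mul2 p q') e).
    by rewrite !coef2_mul; apply: eq_bigr => u _; rewrite qq'.
  by rewrite (mul2C p q') (mul2C p' q') !coef2_mul; apply: eq_bigr => u _; rewrite pp'.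
- by rewrite !coef2_opp pp'.
Qed.

Add Ring laur2_ring : laur2_ring_theory (setoid laur2_eq_equiv laur2_ring_eq_ext).

#[local] Instance add2_proper :
  Proper (@laur2_eq R ==> @laur2_eq R ==> @laur2_eq R) (@add2 R).
Proof. exact: Radd_ext laur2_ring_eq_ext. Qed.

#[local] Instance mul2_proper :
  Proper (@laur2_eq R ==> @laur2_eq R ==> @laur2_eq R) (@mul2 R).
Proof. exact: Rmul_ext laur2_ring_eq_ext. Qed.

#[local] Instance opp2_proper : Proper (@laur2_eq R ==> @laur2_eq R) opp2.
Proof. exact: Ropp_ext laur2_ring_eq_ext. Qed.

#[local] Instance star2_proper : Proper (@laur2_eq R ==> @laur2_eq R) (star2 star).
Proof. by move=> p q pq e; rewrite !coef2_star pq. Qed.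

Lemma star2_add p q : star2 star (add2 p q) = add2 (star2 star p) (star2 star q).
Proof. exact: map_cat. Qed.

Lemma star2_opp p : laur2_eq (star2 star (opp2 p)) (opp2 (star2 star p)).
Proof. by move=> e; rewrite coef2_star !coef2_opp coef2_star rmorphN. Qed.

Lemma star2_mul p q :
  laur2_eq (star2 star (mul2 p q)) (mul2 (star2 star p) (star2 star q)).
Proof.
move=> e; rewrite coef2_star !coef2_mul rmorph_sum big_map.
apply: eq_bigr => -[r [x y]] _ /=; rewrite rmorphM coef2_star.
by case: e => x' y'; rewrite /= !opprD !opprK.
Qed.

Lemma star2K p : laur2_eq (star2 star (star2 star p)) p.
Proof. by move=> e; rewrite !coef2_star opprK star_invol. Qed.

Definition subst2 (s t : int) (p : laur1 R) : L :=
  [seq (u.1, (s * u.2, t * u.2)) | u <- p].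

Lemma at_x2E p : at_x2 p = subst2 2 0 p.
Proof. by apply: eq_map => u; rewrite mul0r. Qed.

Lemma at_y2E p : at_y2 p = subst2 0 2 p.
Proof. by apply: eq_map => u; rewrite mul0r. Qed.

Lemma subst2_cat s t p q : subst2 s t (add1 p q) = add2 (subst2 s t p) (subst2 s t q).
Proof. exact: map_cat. Qed.

Lemma coef2_subst2 s t p e :
  coef2 (subst2 s t p) e = \sum_(u <- p) if (s * u.2, t * u.2) == e then u.1 else 0.
Proof. by rewrite /coef2 big_map. Qed.

Lemma subst2_mul s t p q :
  laur2_eq (subst2 s t (mul1 p q)) (mul2 (subst2 s t p) (subst2 s t q)).
Proof.
move=> e; rewrite coef2_subst2 coef2_mul_sum big_allpairs_dep big_map.
by apply: eq_bigr => u _; rewrite big_map; apply: eq_bigr => v _; rewrite !mulrDr.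
Qed.

Lemma subst2_star s t p :
  laur2_eq (subst2 s t (star1 star p)) (star2 star (subst2 s t p)).
Proof.
move=> e; rewrite coef2_star !coef2_subst2 rmorph_sum big_map.
apply: eq_bigr => u _; case: e => x y; rewrite /= !mulrN !xpair_eqE !eqr_oppLR.
by case: ifP; rewrite ?rmorph0.
Qed.

Lemma subst2_nrm1 s t l (w : 'rV[R]_l) : laur2_eq (subst2 s t (nrm1 star w))
  (mul2 (subst2 s t (psi1 w)) (star2 star (subst2 s t (psi1 w)))).
Proof. by rewrite /nrm1 subst2_mul subst2_star. Qed.

Definition psi_exp (l i : nat) : int := (i.*2.+1)%:Z - l%:Z.

Lemma big_subst2_psi1 s t l (v : 'rV[R]_l) (F : R * (int * int) -> R) :
  \sum_(u <- subst2 s t (psi1 v)) F u =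
  \sum_(i < l) F (v 0 i, (s * psi_exp l i, t * psi_exp l i)).
Proof. by rewrite /subst2 /psi1 -map_comp big_map big_enum. Qed.

Lemma coef2_subst2_psi1 s t l (v : 'rV[R]_l) e : coef2 (subst2 s t (psi1 v)) e =
  \sum_(i < l) if (s * psi_exp l i, t * psi_exp l i) == e then v 0 i else 0.
Proof. exact: big_subst2_psi1. Qed.

Lemma subst2_psi1_spread s t N K (a : 'rV[R]_N) (w : 'rV[R]_K) (g : nat -> nat) :
  (forall j : 'I_N, g j < K)%N ->
  (forall j : 'I_N, psi_exp K (g j) = 2 * psi_exp N j) ->
  (forall k : 'I_K, w 0 k = \sum_(j < N) if k == g j :> nat then a 0 j else 0) ->
  laur2_eq (subst2 s t (psi1 w)) (subst2 (2 * s) (2 * t) (psi1 a)).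
Proof.
move=> g_lt g_exp wE e; rewrite !coef2_subst2_psi1.
transitivity (\sum_(k < K) \sum_(j < N) if k == g j :> nat then
  (if (s * psi_exp K k, t * psi_exp K k) == e then a 0 j else 0) else 0).
  apply: eq_bigr => k _; rewrite wE; case: ifP => _; last first.
    by rewrite big1 // => j _; case: ifP.
  by apply: eq_bigr => j _; case: ifP.
rewrite exchange_big; apply: eq_bigr => j _.
rewrite -big_mkcond (big_ord1_eq _
  (fun k => if (s * psi_exp K k, t * psi_exp K k) == e then a 0 j else 0)).
by rewrite g_lt g_exp !mulrA [s * 2]mulrC [t * 2]mulrC.
Qed.

Lemma subst2_psi1_slash0 s t l (a : 'rV[R]_l.+1) :
  laur2_eq (subst2 s t (psi1 (slash0 a))) (subst2 (2 * s) (2 * t) (psi1 a)).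
Proof.
apply: (@subst2_psi1_spread s t _ _ a _ double) => [j|j|k]; last by rewrite mxE.
  by have := ltn_ord j; lia.
by rewrite /psi_exp; lia.
Qed.

Lemma subst2_psi1_zslash s t l (a : 'rV[R]_l) :
  laur2_eq (subst2 s t (psi1 (zslash a))) (subst2 (2 * s) (2 * t) (psi1 a)).
Proof.
apply: (@subst2_psi1_spread s t _ _ a _ (fun j => j.*2.+1)) => [j|j|k]; last by rewrite mxE.
  by have := ltn_ord j; lia.
by rewrite /psi_exp; lia.
Qed.

Lemma subst2_psi1_vstar s t l (v : 'rV[R]_l) :
  laur2_eq (subst2 s t (psi1 (vstar star v))) (star2 star (subst2 s t (psi1 v))).
Proof.
move=> e; rewrite coef2_star !coef2_subst2_psi1 rmorph_sum (reindex_inj rev_ord_inj).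
apply: eq_bigr => i _; rewrite mxE rev_ordK.
have -> : psi_exp l (rev_ord i) = - psi_exp l i by rewrite /psi_exp /=; have := ltn_ord i; lia.
case: e => x y; rewrite !mulrN !xpair_eqE !eqr_oppLR.
by case: ifP; rewrite ?rmorph0.
Qed.

Lemma coef2_psi2 p q (M : 'M[R]_(p, q)) e : coef2 (psi2 M) e =
  \sum_(i < p) \sum_(j < q) if (psi_exp q j, psi_exp p i) == e then M i j else 0.
Proof.
rewrite /coef2 /psi2 big_allpairs_dep big_enum.
by apply: eq_bigr => i _; rewrite big_enum.
Qed.

Lemma psi2_add p q (M N : 'M[R]_(p, q)) :
  laur2_eq (psi2 (M + N)) (add2 (psi2 M) (psi2 N)).
Proof.
move=> e; rewrite coef2_cat !coef2_psi2 -big_split; apply: eq_bigr => i _.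
by rewrite -big_split; apply: eq_bigr => j _; rewrite mxE /=; case: ifP; rewrite ?addr0.
Qed.

Lemma psi2_opp p q (M : 'M[R]_(p, q)) : laur2_eq (psi2 (- M)) (opp2 (psi2 M)).
Proof.
move=> e; rewrite coef2_opp !coef2_psi2 -sumrN; apply: eq_bigr => i _.
by rewrite -sumrN; apply: eq_bigr => j _; rewrite mxE; case: ifP; rewrite ?oppr0.
Qed.

Lemma psi2_outer p q (u : 'rV[R]_p) (v : 'rV[R]_q) :
  laur2_eq (psi2 (u^T *m v)) (mul2 (subst2 0 1 (psi1 u)) (subst2 1 0 (psi1 v))).
Proof.
move=> e; rewrite coef2_psi2 coef2_mul_sum big_subst2_psi1; apply: eq_bigr => i _.
rewrite big_subst2_psi1; apply: eq_bigr => j _ /=.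
rewrite !mxE big_ord1 !mxE !mul0r !mul1r.
have -> : (0, psi_exp p i) + (psi_exp q j, 0) = (0 + psi_exp q j, psi_exp p i + 0) by [].
by rewrite add0r addr0.
Qed.

Definition laur_norm (p : L) : L := mul2 p (star2 star p).

Lemma laur_norm_four_square (A B C D E F G H : L) :
  let star2 := star2 star in
  laur2_eq
    (add2 (add2 (add2
      (laur_norm (add2 (sub2 (add2 (mul2 (star2 F) A) (mul2 G C)) (mul2 E (star2 B)))
                       (mul2 H D)))
      (laur_norm (sub2 (add2 (add2 (mul2 (star2 F) B) (mul2 (star2 G) D))
                             (mul2 E (star2 A))) (mul2 (star2 H) C))))
      (laur_norm (sub2 (sub2 (sub2 (mul2 (star2 G) A) (mul2 F C)) (mul2 H B))
                       (mul2 E (star2 D)))))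
      (laur_norm (add2 (add2 (sub2 (mul2 G B) (mul2 F D)) (mul2 (star2 H) A))
                       (mul2 E (star2 C)))))
    (mul2 (add2 (add2 (add2 (laur_norm A) (laur_norm B)) (laur_norm C)) (laur_norm D))
          (add2 (add2 (add2 (laur_norm E) (laur_norm F)) (laur_norm G)) (laur_norm H))).
Proof.
rewrite /laur_norm /sub2 !star2_add !star2_opp !star2_mul !star2K.
ring.
Qed.

Lemma psi2_norm_identity m n (a b : 'rV[R]_n.+1) (c d : 'rV[R]_n)
    (f g : 'rV[R]_m.+1) (h e : 'rV[R]_m) :
  let a' := slash0 a in let b' := slash0 b in
  let c' := zslash c in let d' := zslash d in
  let f' := slash0 f in let g' := slash0 g in
  let h' := zslash h in let e' := zslash e in
  let vs l (v : 'rV[R]_l) := vstar star v in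
  let Q := (vs _ f')^T *m a' + g'^T *m c' - e'^T *m vs _ b' + h'^T *m d' in
  let R' := (vs _ f')^T *m b' + (vs _ g')^T *m d' + e'^T *m vs _ a'
            - (vs _ h')^T *m c' in
  let S := (vs _ g')^T *m a' - f'^T *m c' - h'^T *m b' - e'^T *m vs _ d' in
  let T' := g'^T *m b' - f'^T *m d' + (vs _ h')^T *m a' + e'^T *m vs _ c' in
  laur2_eq
    (add2 (add2 (add2 (nrm2 star Q) (nrm2 star R')) (nrm2 star S)) (nrm2 star T'))
    (mul2 (at_x2 (add1 (add1 (add1 (nrm1 star a) (nrm1 star b)) (nrm1 star c)) (nrm1 star d)))
          (at_y2 (add1 (add1 (add1 (nrm1 star e) (nrm1 star f)) (nrm1 star g)) (nrm1 star h)))).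
Proof.
rewrite /= /nrm2 at_x2E at_y2E !subst2_cat !subst2_nrm1.
rewrite !psi2_add !psi2_opp !psi2_outer !subst2_psi1_vstar.
rewrite !subst2_psi1_slash0 !subst2_psi1_zslash !mulr0 !mulr1.
exact: laur_norm_four_square.
Qed.

End LaurentRing.

Section ParitySupport.
Variable R : comNzRingType.
Variable T : pred R.
Hypothesis T_mul : forall s t, s \in T -> t \in T -> s * t \in T.

Definition parity_support (p : bool) l (v : 'rV[R]_l) : Prop :=
  forall k : 'I_l, if odd k == p then (v 0 k \in T : Prop) else v 0 k = 0.

Definition mx_parity_support (p q : bool) r s (M : 'M[R]_(r, s)) : Prop :=
  forall (i : 'I_r) (j : 'I_s),
    if (odd i == p) && (odd j == q) then (M i j \in T : Prop) else M i j = 0.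

Lemma slash0_support l (a : 'rV[R]_l.+1) :
  (forall i, a 0 i \in T) -> parity_support false (slash0 a).
Proof.
move=> Ta k; rewrite mxE -big_mkcond; have k_lt := ltn_ord k.
case: ifP => [/eqP k_even | k_odd]; last first.
  by rewrite big_pred0 // => j; apply/eqP => k_eq; rewrite k_eq odd_double in k_odd.
have j_lt : (k./2 < l.+1)%N by lia.
rewrite (big_pred1 (Ordinal j_lt)) // => j.
by apply/eqP/eqP => [k_eq | ->]; first apply: val_inj; rewrite /=; lia.
Qed.

Lemma zslash_support l (a : 'rV[R]_l) :
  (forall i, a 0 i \in T) -> parity_support true (zslash a).
Proof.
move=> Ta k; rewrite mxE -big_mkcond; have k_lt := ltn_ord k.
case: ifP => [/eqP k_odd | k_even]; last first.
  by rewrite big_pred0 // => j; apply/eqP => k_eq; rewrite k_eq /= odd_double in k_even.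
have j_lt : (k./2 < l)%N by lia.
rewrite (big_pred1 (Ordinal j_lt)) // => j.
by apply/eqP/eqP => [k_eq | ->]; first apply: val_inj; rewrite /=; lia.
Qed.

(* Reversal preserves parities because the length [l.*2.+1] is odd. *)
Lemma vstar_support (star : {rmorphism R -> R}) (p : bool) l (v : 'rV[R]_l.*2.+1) :
  {homo star : t / t \in T} -> parity_support p v -> parity_support p (vstar star v).
Proof.
move=> T_star Tv k; rewrite mxE; move: (Tv (rev_ord k)) => /=.
have k_lt := ltn_ord k; rewrite subSS oddB ?odd_double //=.
by case: (odd k == p) => [/T_star | ->]; rewrite ?rmorph0.
Qed.

Lemma outer_support (p q : bool) r s (u : 'rV[R]_r) (v : 'rV[R]_s) :
  parity_support p u -> parity_support q v -> mx_parity_support p q (u^T *m v).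
Proof.
move=> Tu Tv i j; rewrite !mxE big_ord1 !mxE.
move: (Tu i) (Tv j); case: (odd i == p); case: (odd j == q) => /= Tui Tvj;
  by rewrite ?Tui ?Tvj ?mulr0 ?mul0r ?T_mul.
Qed.

Hypothesis T_m1 : -1 \in T.

Lemma mx_support_opp (p q : bool) r s (M : 'M[R]_(r, s)) :
  mx_parity_support p q M -> mx_parity_support p q (- M).
Proof.
move=> TM i j; rewrite mxE; move: (TM i j).
by case: ifP => _ TMij; rewrite ?TMij ?oppr0 // -mulN1r T_mul.
Qed.

Lemma mx_support_sum4 r s (M1 M2 M3 M4 : 'M[R]_(r, s)) :
  mx_parity_support false false M1 -> mx_parity_support false true M2 ->
  mx_parity_support true false M3 -> mx_parity_support true true M4 ->
  forall i j, (M1 + M2 + M3 + M4) i j \in T.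
Proof.
move=> T1 T2 T3 T4 i j; rewrite !mxE.
move: (T1 i j) (T2 i j) (T3 i j) (T4 i j).
by case: (odd i); case: (odd j) => /= t1 t2 t3 t4; rewrite ?t1 ?t2 ?t3 ?t4 ?addr0 ?add0r.
Qed.
End ParitySupport.

Theorem lemma3p2 (R : comNzRingType) (star : {rmorphism R -> R})
  (star_invol : involutive star)
  (T : pred R)
  (T_nz : forall t, t \in T -> t != 0)
  (T_mul : forall s t, s \in T -> t \in T -> s * t \in T)
  (T_m1 : -1 \in T)
  (T_star : forall t, (t \in T) <-> exists2 u, u \in T & t = star u)
  (m n : nat) (m_gt0 : (0 < m)%N) (n_gt0 : (0 < n)%N)
  (a b : 'rV[R]_n.+1) (c d : 'rV[R]_n) (f g : 'rV[R]_m.+1) (h e : 'rV[R]_m)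
  (Ha : forall i, a 0 i \in T) (Hb : forall i, b 0 i \in T)
  (Hc : forall i, c 0 i \in T) (Hd : forall i, d 0 i \in T)
  (Hf : forall i, f 0 i \in T) (Hg : forall i, g 0 i \in T)
  (Hh : forall i, h 0 i \in T) (He : forall i, e 0 i \in T) :
  let a' := slash0 a in let b' := slash0 b in
  let c' := zslash c in let d' := zslash d in
  let f' := slash0 f in let g' := slash0 g in
  let h' := zslash h in let e' := zslash e in
  let vs l (v : 'rV[R]_l) := vstar star v in
  let Q := (vs _ f')^T *m a' + g'^T *m c' - e'^T *m vs _ b' + h'^T *m d' in
  let R' := (vs _ f')^T *m b' + (vs _ g')^T *m d' + e'^T *m vs _ a'
            - (vs _ h')^T *m c' in
  let S := (vs _ g')^T *m a' - f'^T *m c' - h'^T *m b' - e'^T *m vs _ d' in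
  let T' := g'^T *m b' - f'^T *m d' + (vs _ h')^T *m a' + e'^T *m vs _ c' in
  [/\ forall i j, Q i j \in T, forall i j, R' i j \in T,
      forall i j, S i j \in T, forall i j, T' i j \in T &
      laur2_eq
        (add2 (add2 (add2 (nrm2 star Q) (nrm2 star R')) (nrm2 star S)) (nrm2 star T'))
        (mul2 (at_x2 (add1 (add1 (add1 (nrm1 star a) (nrm1 star b)) (nrm1 star c)) (nrm1 star d)))
              (at_y2 (add1 (add1 (add1 (nrm1 star e) (nrm1 star f)) (nrm1 star g)) (nrm1 star h))))].
Proof.
have T_star_closed : {homo star : t / t \in T} by move=> t Tt; apply/T_star; exists t.
have support_opp := mx_support_opp T_mul T_m1.
have support_outer := outer_support T_mul.
cbv zeta; split; last exact: psi2_norm_identity.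
all: apply: mx_support_sum4; try apply: support_opp; apply: support_outer;
  do ?apply: vstar_support => //; by [apply: slash0_support | apply: zslash_support].
Qed.
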